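(* Let $H$ and $E$ be Hilbert spaces, let $T:H\to H$ be a bounded linear operator with $\ker T=\{0\}$, and let $\gamma:E\to H$ be a bounded linear operator with $\ker\gamma=\{0\}$ and $\mathcal{R}(T)\cap\mathcal{R}(\gamma)=\{0\}$. Define linear maps $A:\mathcal{D}(A)\to H$ and $\Gamma_0:\mathcal{D}(A)\to E$ on $\mathcal{D}(A)=\mathcal{R}(T)\dot+\mathcal{R}(\gamma)$ by $A(Tf+\gamma\varphi)=f$ and $\Gamma_0(Tf+\gamma\varphi)=\varphi$ for $f\in H$, $\varphi\in E$. If $\lambda\in\mathbb{C}$ is such that $I-\lambda T$ is boundedly invertible in $H$, then for every $f\in H$ and $\varphi\in E$ the problem of finding $u\in\mathcal{D}(A)$ with \[(A-\lambda I)u=f,\qquad \Gamma_0u=\varphi\] has a unique solution, namely \[u=T(I-\lambda T)^{-1}f+(I-\lambda T)^{-1}\gamma\varphi .\]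
   Context: $\mathcal{R}(\cdot)$ denotes the range of an operator and $\dot+$ a direct sum of linear subspaces; $A$ and $\Gamma_0$ are well defined by the stated injectivity and trivial-intersection assumptions. *)

From HB Require Import structures.
From mathcomp Require Import all_boot all_order all_algebra.
From mathcomp Require Import all_classical all_reals all_analysis.
From mathcomp Require Import complex.
Set Implicit Arguments. Unset Strict Implicit. Unset Printing Implicit Defensive.
Import Order.TTheory GRing.Theory Num.Theory ComplexField.
Import numFieldNormedType.Exports.
Local Open Scope ring_scope.
Local Open Scope classical_set_scope.

Definition is_inner_product (R : realType) (H : normedModType R[i])
  (ip : H -> H -> R[i]) : Prop :=
  [/\ forall (a : R[i]) (x y z : H), ip (a *: x + y) z = a * ip x z + ip y z,
      forall x y : H, ip y x = (ip x y)^*%C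
    & forall x : H, `|x| ^+ 2 = ip x x].

Definition hilbert_space (R : realType) (H : completeNormedModType R[i]) : Prop :=
  exists ip : H -> H -> R[i], is_inner_product ip.

Definition domA (K : ringType) (H E : lmodType K) (T : H -> H) (g : E -> H)
  : set H := [set u | exists (f : H) (phi : E), u = T f + g phi].

(* A (T f + gamma phi) = f ;  Gamma0 (T f + gamma phi) = phi.
   Well defined by injectivity of T, gamma and R(T) /\ R(gamma) = {0};
   the value outside D(A) is irrelevant (set to 0). *)
Definition opA (K : ringType) (H E : lmodType K) (T : H -> H) (g : E -> H)
  (u : H) : H :=
  match pselect (exists p : H * E, u = T p.1 + g p.2) with
  | left e => (projT1 (cid e)).1
  | right _ => 0
  end.

Definition Gamma0 (K : ringType) (H E : lmodType K) (T : H -> H) (g : E -> H)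
  (u : H) : E :=
  match pselect (exists p : H * E, u = T p.1 + g p.2) with
  | left e => (projT1 (cid e)).2
  | right _ => 0
  end.

From HB Require Import structures.
From mathcomp Require Import all_boot all_order all_algebra.
From mathcomp Require Import all_classical all_reals all_analysis.
From mathcomp Require Import complex.
Import Order.TTheory GRing.Theory Num.Theory ComplexField.
Import numFieldNormedType.Exports.
Set Implicit Arguments. Unset Strict Implicit. Unset Printing Implicit Defensive.
Local Open Scope ring_scope.
Local Open Scope classical_set_scope.

(* Writing u = T a + gamma b, the boundary condition forces b = phi and
   (A - lambda) u = f becomes (I - lambda T) a = f + lambda gamma phi, so
   a = S (f + lambda gamma phi) with S = (I - lambda T)^-1.  The resolvent
   identity S x = x + lambda T (S x) then rewrites T a + gamma phi as
   T (S f) + S (gamma phi).  Only algebra is involved: neither completeness,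
   the inner products nor continuity play a role. *)

Section BoundaryProblem.
Variables (K : nzRingType) (H E : lmodType K).
Variables (T : {linear H -> H}) (g : {linear E -> H}).
Hypothesis kerT : forall x : H, T x = 0 -> x = 0.
Hypothesis kerg : forall y : E, g y = 0 -> y = 0.
Hypothesis ranTg : forall (x : H) (y : E), T x = g y -> T x = 0.

Lemma decomp_inj (a a' : H) (b b' : E) : T a + g b = T a' + g b' -> a = a' /\ b = b'.
Proof.
move=> e.
have eTg : T (a - a') = g (b' - b).
  by rewrite !raddfB /= -[T a](addrK (g b)) e addrAC [T a' + _]addrC addrK.
have Ta0 := ranTg eTg.
have -> : a = a' by apply/eqP; rewrite -subr_eq0; apply/eqP/kerT.
split=> //; apply/eqP; rewrite eq_sym -subr_eq0; apply/eqP/kerg.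
by rewrite -eTg.
Qed.

Lemma opA_decomp (a : H) (b : E) : opA T g (T a + g b) = a.
Proof.
rewrite /opA; case: pselect => [e|[]]; last by exists (a, b).
by case: (cid e) => p /= /decomp_inj [].
Qed.

Lemma Gamma0_decomp (a : H) (b : E) : Gamma0 T g (T a + g b) = b.
Proof.
rewrite /Gamma0; case: pselect => [e|[]]; last by exists (a, b).
by case: (cid e) => p /= /decomp_inj [].
Qed.

Variables (lambda : K) (S : {linear H -> H}).
Hypothesis SL : forall x : H, S (x - lambda *: T x) = x.
Hypothesis LS : forall x : H, S x - lambda *: T (S x) = x.

Lemma resolventE (x : H) : S x = x + lambda *: T (S x).
Proof. by rewrite -{2}(LS x) subrK. Qed.

Lemma resolvent_eq (a y : H) : a - lambda *: T a = y <-> a = S y.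
Proof. by split=> [<-|->]; rewrite ?SL ?LS. Qed.

Lemma boundary_decomp (a f : H) (b phi : E) :
  opA T g (T a + g b) - lambda *: (T a + g b) = f /\ Gamma0 T g (T a + g b) = phi
  <-> b = phi /\ a = S (f + lambda *: g phi).
Proof.
rewrite opA_decomp Gamma0_decomp -resolvent_eq scalerDr opprD addrA.
split=> [[<- ->]|[-> /eqP]]; first by rewrite subrK.
by rewrite -subr_eq => /eqP.
Qed.

Lemma boundary_solution_formula (f : H) (phi : E) :
  T (S (f + lambda *: g phi)) + g phi = T (S f) + S (g phi).
Proof.
rewrite 2!linearD /= -addrA; congr (_ + _).
by rewrite !linearZ /= addrC -resolventE.
Qed.

Lemma boundary_problemP (f : H) (phi : E) (u : H) :
  (domA T g u /\ opA T g u - lambda *: u = f /\ Gamma0 T g u = phi)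
  <-> u = T (S f) + S (g phi).
Proof.
rewrite -boundary_solution_formula; split.
  by move=> [[a [b ->]] /boundary_decomp [-> ->]].
move=> ->; split; first by exists (S (f + lambda *: g phi)), phi.
exact/boundary_decomp.
Qed.

End BoundaryProblem.

Theorem theorem1 (R : realType) (H E : completeNormedModType R[i])
  (hH : hilbert_space H) (hE : hilbert_space E)
  (T : {linear H -> H}) (g : {linear E -> H})
  (Tcont : continuous T) (gcont : continuous g)
  (kerT : forall x : H, T x = 0 -> x = 0)
  (kerg : forall y : E, g y = 0 -> y = 0)
  (ranTg : forall (x : H) (y : E), T x = g y -> T x = 0)
  (lambda : R[i])
  (S : {linear H -> H}) (Scont : continuous S)
  (SL : forall x : H, S (x - lambda *: T x) = x)
  (LS : forall x : H, S x - lambda *: T (S x) = x) :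
  forall (f : H) (phi : E),
    (exists! u : H, domA T g u /\ opA T g u - lambda *: u = f /\ Gamma0 T g u = phi) /\
    (forall u : H, (domA T g u /\ opA T g u - lambda *: u = f /\ Gamma0 T g u = phi)
                   <-> u = T (S f) + S (g phi)).
Proof.
move=> f phi.
have solP := boundary_problemP kerT kerg ranTg SL LS f phi.
split=> //; exists (T (S f) + S (g phi)).
split; first exact/solP.
by move=> u /solP.
Qed.
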